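(* Let $f_1,\dots,f_T\in\mathcal F_X(\alpha,l,G)$, and let $x_1,\dots,x_T$ be the outputs of online gradient descent with stepsize $1/l$: $$x_1=x_0,\qquad x_t=\Pi_X\big(x_{t-1}-\tfrac1l\nabla f_{t-1}(x_{t-1})\big)\ \text{ for } t\ge2.$$ Then $$\sum_{t=1}^T\|x_t-x_{t-1}\|^2\le\frac{2G}{l(1-\kappa)}\sum_{t=1}^T\|\theta_t-\theta_{t-1}\|,$$ where $\kappa=\sqrt{1-\alpha/l}$, $\theta_t=\arg\min_{x\in X}f_t(x)$ for $t\ge1$, and $\theta_0=x_0$.
   Context: $X\subseteq\mathbb R^n$ is nonempty, compact and convex, $\Pi_X$ is projection onto $X$, and $x_0\in X$. $\mathcal F_X(\alpha,l,G)$ (with $0<\alpha\le l$) is the set of differentiable $f:\mathbb R^n\to\mathbb R$ that are $\alpha$-strongly convex and $l$-smooth on $\mathbb R^n$ and satisfy $\|\nabla f(x)\|\le G$ for $x\in X$. *)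

From HB Require Import structures.
From mathcomp Require Import all_boot all_order all_algebra.
From mathcomp Require Import all_classical all_reals all_analysis.
Set Implicit Arguments. Unset Strict Implicit. Unset Printing Implicit Defensive.
Import Order.TTheory GRing.Theory Num.Theory.
Import numFieldNormedType.Exports.
Local Open Scope classical_set_scope.
Local Open Scope ring_scope.

Section Defs.
Context {R : realType} {n : nat}.
Local Notation vec := 'rV[R]_n.

Definition dotv (u v : vec) : R := \sum_(i < n) u ord0 i * v ord0 i.
Definition enorm (u : vec) : R := Num.sqrt (dotv u u).

Definition is_gradient (f : vec -> R) (g : vec -> vec) : Prop :=
  forall x, differentiable f x /\ forall v, 'd f x v = dotv (g x) v.

Definition strongly_convex (alpha : R) (f : vec -> R) (g : vec -> vec) : Prop :=
  forall x y, f x + dotv (g x) (y - x) + alpha / 2 * enorm (y - x) ^+ 2 <= f y.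

Definition smooth (l : R) (g : vec -> vec) : Prop :=
  forall x y, enorm (g x - g y) <= l * enorm (x - y).

Definition in_FX (X : set vec) (alpha l G : R) (f : vec -> R) (g : vec -> vec)
  : Prop :=
  [/\ is_gradient f g, strongly_convex alpha f g, smooth l g &
      forall x, X x -> enorm (g x) <= G].

Definition is_projection (X : set vec) (P : vec -> vec) : Prop :=
  forall z, X (P z) /\ forall y, X y -> enorm (z - P z) <= enorm (z - y).

Definition is_argmin (X : set vec) (f : vec -> R) (m : vec) : Prop :=
  X m /\ forall y, X y -> f m <= f y.

(* online gradient descent with stepsize 1/l:
   x_0 = x0, x_1 = x0, x_{t+2} = P (x_{t+1} - (1/l) g_{t+1}(x_{t+1})) *)
Fixpoint ogd (P : vec -> vec) (g : nat -> vec -> vec) (l : R) (x0 : vec)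
  (t : nat) : vec :=
  match t with
  | 0 => x0
  | 1 => x0
  | (s.+1) as t' =>
      let xs := ogd P g l x0 s in P (xs - l^-1 *: g s xs)
  end.
End Defs.

From HB Require Import structures.
From mathcomp Require Import all_boot all_order all_algebra.
From mathcomp Require Import all_classical all_reals all_analysis.
From mathcomp Require Import ring lra.
Set Implicit Arguments. Unset Strict Implicit. Unset Printing Implicit Defensive.
Import Order.TTheory GRing.Theory Num.Theory.
Import numFieldNormedType.Exports.
Local Open Scope classical_set_scope.
Local Open Scope ring_scope.

(* One projected gradient step with stepsize [1/l] moves the iterate closer to the
   minimiser [theta] of the current loss by the factor [kappa]: this combines the
   variational inequality of the projection, strong convexity, and the quadratic
   upper bound of an [l]-smooth convex function (obtained here by repeated
   halving instead of integration).  Hence [a_t = |x_t - theta_t|] satisfies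
   [a_0 = 0] and [a_(t+1) <= kappa a_t + |theta_(t+1) - theta_t|], so that
   [(1 - kappa) sum a_t <= sum |theta_(t+1) - theta_t|].  A step moves the
   iterate by at most [G/l] (the gradient is bounded by [G] on [X]) and by at
   most [2 a_t] (both ends are within [a_t] of [theta_t]), whence
   [|x_(t+1) - x_t|^2 <= 2 (G/l) a_t]; summing gives the bound. *)

Section Euclidean.
Context {R : realType} {n : nat}.
Implicit Types (u v w : 'rV[R]_n) (k : R).

Lemma dotvC u v : dotv u v = dotv v u.
Proof. by apply: eq_bigr => i _; rewrite mulrC. Qed.

Lemma dotvDl u v w : dotv (u + v) w = dotv u w + dotv v w.
Proof. by rewrite /dotv -big_split; apply: eq_bigr => i _; rewrite mxE mulrDl. Qed.

Lemma dotvZl k u w : dotv (k *: u) w = k * dotv u w.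
Proof. by rewrite /dotv mulr_sumr; apply: eq_bigr => i _; rewrite mxE mulrA. Qed.

Lemma dotvNl u w : dotv (- u) w = - dotv u w.
Proof. by rewrite -scaleN1r dotvZl mulN1r. Qed.

Lemma dotvBl u v w : dotv (u - v) w = dotv u w - dotv v w.
Proof. by rewrite dotvDl dotvNl. Qed.

Lemma dotvDr u v w : dotv w (u + v) = dotv w u + dotv w v.
Proof. by rewrite !(dotvC w) dotvDl. Qed.

Lemma dotvZr k u w : dotv w (k *: u) = k * dotv w u.
Proof. by rewrite !(dotvC w) dotvZl. Qed.

Lemma dotvNr u w : dotv w (- u) = - dotv w u.
Proof. by rewrite !(dotvC w) dotvNl. Qed.

Lemma dotvBr u v w : dotv w (u - v) = dotv w u - dotv w v.
Proof. by rewrite !(dotvC w) dotvBl. Qed.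

Lemma dotv0r u : dotv u 0 = 0.
Proof. by rewrite -(scale0r 0) dotvZr mul0r. Qed.

Lemma dotv_ge0 u : 0 <= dotv u u.
Proof. by apply: sumr_ge0 => i _; rewrite -expr2 sqr_ge0. Qed.

Lemma dotv_eq0 u : (dotv u u == 0) = (u == 0).
Proof.
rewrite psumr_eq0 => [|i _]; last by rewrite -expr2 sqr_ge0.
apply/allP/eqP => [u0|-> i _]; last by rewrite /= mxE mulr0.
apply/rowP => i; apply/eqP; rewrite mxE -sqrf_eq0 expr2.
exact: u0 i (mem_index_enum i).
Qed.

Lemma enorm_ge0 u : 0 <= enorm u.
Proof. exact: sqrtr_ge0. Qed.

Lemma enorm_sqr u : enorm u ^+ 2 = dotv u u.
Proof. by rewrite sqr_sqrtr // dotv_ge0. Qed.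

Lemma enormZ k u : enorm (k *: u) = `|k| * enorm u.
Proof. by rewrite /enorm dotvZl dotvZr mulrA -expr2 sqrtrM ?sqr_ge0 // sqrtr_sqr. Qed.

Lemma enorm0 : enorm (0 : 'rV[R]_n) = 0.
Proof. by rewrite /enorm dotv0r sqrtr0. Qed.

Lemma enormN u : enorm (- u) = enorm u.
Proof. by rewrite -scaleN1r enormZ normrN1 mul1r. Qed.

Lemma enorm_distC u v : enorm (u - v) = enorm (v - u).
Proof. by rewrite -enormN opprB. Qed.

Lemma enorm_sqrD u v :
  enorm (u + v) ^+ 2 = enorm u ^+ 2 + 2 * dotv u v + enorm v ^+ 2.
Proof. by rewrite !enorm_sqr dotvDl !dotvDr (dotvC v u); ring. Qed.

Lemma enorm_sqrB u v :
  enorm (u - v) ^+ 2 = enorm u ^+ 2 - 2 * dotv u v + enorm v ^+ 2.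
Proof. by rewrite enorm_sqrD dotvNr enormN; ring. Qed.

Lemma dotv_sqr_le u v : dotv u v ^+ 2 <= dotv u u * dotv v v.
Proof.
have [->|v0] := eqVneq v 0; first by rewrite !dotv0r expr0n mulr0.
have c_gt0 : 0 < dotv v v by rewrite lt_def dotv_eq0 v0 dotv_ge0.
(* with [b = <u,v>] and [c = |v|^2], [|c u - b v|^2 >= 0] reads [c (|u|^2 c - b^2) >= 0] *)
have := dotv_ge0 (dotv v v *: u - dotv u v *: v).
rewrite dotvBl !dotvBr !dotvZl !dotvZr (dotvC v u).
have -> : forall a b c : R, c * (c * a) - c * (b * b) - (b * (c * b) - b * (b * c))
    = c * (a * c - b ^+ 2) by move=> *; ring.
by rewrite pmulr_rge0 // subr_ge0.
Qed.

Lemma dotv_le u v : dotv u v <= enorm u * enorm v.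
Proof.
rewrite (le_trans (ler_norm _)) // -sqrtr_sqr -sqrtrM ?dotv_ge0 //.
by rewrite ler_sqrt ?dotv_sqr_le // mulr_ge0 ?dotv_ge0.
Qed.

Lemma enormD_le u v : enorm (u + v) <= enorm u + enorm v.
Proof.
rewrite -ler_sqr ?nnegrE ?addr_ge0 ?enorm_ge0 // enorm_sqrD sqrrD mulr2n.
by have := dotv_le u v; lra.
Qed.

Lemma enorm_distD_le u v w : enorm (v - w) <= enorm (v - u) + enorm (u - w).
Proof. by rewrite (le_trans _ (enormD_le _ _)) // addrA subrK. Qed.

End Euclidean.

Lemma le0_of_le_mul_small {R : realFieldType} (a b : R) : 0 <= b ->
  (forall s, 0 < s <= 1 -> a <= s * b) -> a <= 0.
Proof.
move=> b_ge0 small; apply/ler_addgt0Pr => e e_gt0; rewrite add0r.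
have be_gt0 : 0 < b + e by rewrite ltr_wpDl.
apply: le_trans (small (e / (b + e)) _) _.
  by rewrite divr_gt0 //= ler_pdivrMr // mul1r lerDr.
by rewrite mulrAC ler_pdivrMr // ler_pM2l // lerDl ltW.
Qed.

Section Projection.
Context {R : realType} {n : nat} (X : set 'rV[R]_n) (P : 'rV[R]_n -> 'rV[R]_n).
Hypotheses (convX : convex_set X) (projP : is_projection X P).

Lemma projection_variational_ineq z y : X y -> dotv (z - P z) (y - P z) <= 0.
Proof.
move=> Xy; have [XPz Pz_min] := projP z.
rewrite -(pmulr_rle0 _ (ltr0n _ 2)).
apply: (le0_of_le_mul_small (dotv_ge0 (y - P z))) => s /andP[s_gt0 s_le1].
pose lam : {i01 R} := Itv01 (ltW s_gt0) s_le1.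
have Xq : X (P z + s *: (y - P z)).
  have := convX lam (mem_set Xy) (mem_set XPz).
  by rewrite /conv /= /unstable.onem scalerBr scalerBl scale1r addrCA => /set_mem.
have := Pz_min _ Xq; rewrite -ler_sqr ?nnegrE ?enorm_ge0 // opprD addrA.
rewrite (enorm_sqrB (z - P z)) dotvZr enormZ exprMn real_normK ?num_real //.
rewrite [enorm (y - _) ^+ 2]enorm_sqr => h.
by rewrite -(ler_pM2l s_gt0); nra.
Qed.

Lemma projection_step_le x q : X x -> enorm (P (x - q) - x) <= enorm q.
Proof.
move=> Xx; set p := P (x - q); rewrite enorm_distC.
have vi := projection_variational_ineq (x - q) Xx.
rewrite -/p addrAC dotvBl -enorm_sqr in vi.
have := dotv_le q (x - p); have := enorm_ge0 q; have := enorm_ge0 (x - p).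
nra.
Qed.

End Projection.

Lemma le_of_le_add_geometric {R : realType} (a b K : R) :
  (forall m, a <= b + K * 2^-1 ^+ m) -> a <= b.
Proof.
move=> le_ab.
have : (fun m => b + K * 2^-1 ^+ m) @ \oo --> b.
  rewrite -[b in _ --> b]addr0; apply: cvgD; first exact: cvg_cst.
  by apply: cvg_geometric; rewrite ger0_norm // invf_lt1 // ltr1n.
by move/cvgr_to_ge; apply; apply: nearW.
Qed.

Section Smooth.
Context {R : realType} {n : nat} (alpha l : R) (f : 'rV[R]_n -> R)
  (g : 'rV[R]_n -> 'rV[R]_n).
Hypotheses (convf : strongly_convex alpha f g) (smoothg : smooth l g).

Lemma smooth_dotv_le y d : dotv (g (y + d) - g y) d <= l * enorm d ^+ 2.
Proof.
rewrite (le_trans (dotv_le _ _)) // expr2 mulrA ler_wpM2r ?enorm_ge0 //.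
by rewrite (le_trans (smoothg _ _)) // [y + d]addrC addrK.
Qed.

(* Splitting [d] into two halves halves the excess over [l/2]; convexity at [y + d]
   and the Lipschitz gradient give the excess [(l - alpha)/2] for [m = 0]. *)
Lemma smooth_upper_bound_halving m y d :
  f (y + d) - f y - dotv (g y) d
    <= (l / 2 + (l - alpha) / 2 * 2^-1 ^+ m) * enorm d ^+ 2.
Proof.
elim: m y d => [|m IH] y d.
  have := convf (y + d) y; have := smooth_dotv_le y d.
  rewrite opprD addrA subrr add0r enormN dotvNr dotvBl expr0 mulr1; lra.
set h := 2^-1 *: d.
have dhh : d = h + h by rewrite -scalerDl -div1r -splitr scale1r.
have nh : enorm h ^+ 2 = enorm d ^+ 2 / 4.
  by rewrite enormZ exprMn ger0_norm // expr2; field.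
have gh : dotv (g y) h = dotv (g y) d / 2 by rewrite dotvZr mulrC.
have yhh : y + h + h = y + d by rewrite -addrA -dhh.
have := IH (y + h) h; have := IH y h; have := smooth_dotv_le y h.
set e := (l - alpha) / 2 * 2^-1 ^+ m.
have em : (l - alpha) / 2 * 2^-1 ^+ m.+1 = e / 2 by rewrite exprS /e; ring.
rewrite yhh nh gh dotvBl em; lra.
Qed.

Lemma smooth_upper_bound x y :
  f y <= f x + dotv (g x) (y - x) + l / 2 * enorm (y - x) ^+ 2.
Proof.
rewrite -{1}(subrK x y) [_ + x]addrC.
apply: (le_of_le_add_geometric (K := (l - alpha) / 2 * enorm (y - x) ^+ 2)) => m.
have := smooth_upper_bound_halving m x (y - x); lra.
Qed.

End Smooth.

Section ProjectedGradientStep.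
Context {R : realType} {n : nat} (X : set 'rV[R]_n) (P : 'rV[R]_n -> 'rV[R]_n)
  (alpha l : R) (f : 'rV[R]_n -> R) (g : 'rV[R]_n -> 'rV[R]_n) (theta : 'rV[R]_n).
Hypotheses (convX : convex_set X) (projP : is_projection X P) (l_gt0 : 0 < l)
  (convf : strongly_convex alpha f g) (smoothg : smooth l g)
  (min_theta : is_argmin X f theta).

Lemma proj_grad_step_sqr_contract x :
  l * enorm (P (x - l^-1 *: g x) - theta) ^+ 2
    <= (l - alpha) * enorm (x - theta) ^+ 2.
Proof.
set p := P (x - l^-1 *: g x).
have [X_theta theta_min] := min_theta.
have Xp : X p by have [] := projP (x - l^-1 *: g x).
have gap : l * dotv (x - p) (theta - p) <= dotv (g x) (theta - p).
  have := projection_variational_ineq convX projP (x - l^-1 *: g x) X_theta.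
  rewrite -/p addrAC => vi; rewrite dotvBl dotvZl subr_le0 in vi.
  by rewrite -ler_pdivlMl.
have lower := convf x theta.
have upper := smooth_upper_bound convf smoothg x p.
have fmin := theta_min p Xp.
have polar : enorm (x - theta) ^+ 2 = enorm (x - p) ^+ 2
    - 2 * dotv (x - p) (theta - p) + enorm (theta - p) ^+ 2.
  by rewrite -enorm_sqrB opprB addrA subrK.
move: polar gap lower upper.
rewrite !(dotvBr _ _ (g x)) (enorm_distC p x) (enorm_distC p theta) (enorm_distC theta x).
move=> polar; rewrite polar; nra.
Qed.

Lemma proj_grad_step_contract x :
  enorm (P (x - l^-1 *: g x) - theta)
    <= Num.sqrt (1 - alpha / l) * enorm (x - theta).
Proof.
have := proj_grad_step_sqr_contract x; set p := P _ => contract.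
rewrite -[enorm (p - _)]ger0_norm ?enorm_ge0 // -sqrtr_sqr.
rewrite -[enorm (x - _)]ger0_norm ?enorm_ge0 // -sqrtr_sqr mulrC -sqrtrM ?sqr_ge0 //.
set N := enorm (x - theta) ^+ 2 in contract *.
have -> : N * (1 - alpha / l) = l^-1 * ((l - alpha) * N) by field; rewrite gt_eqF.
by rewrite ler_wsqrtr // ler_pdivlMl.
Qed.

End ProjectedGradientStep.

Lemma sum_le_of_contraction {R : realFieldType} (a d : nat -> R) (k : R) T :
  0 <= a T -> (forall t, (t < T)%N -> a t.+1 <= k * a t + d t) ->
  (1 - k) * \sum_(0 <= t < T) a t <= a 0%N + \sum_(0 <= t < T) d t.
Proof.
move=> aT_ge0 rec.
have shift : \sum_(0 <= t < T) a t.+1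
    <= k * \sum_(0 <= t < T) a t + \sum_(0 <= t < T) d t.
  rewrite mulr_sumr -big_split; apply: ler_sum_nat => t /andP[_ tT]; exact: rec.
have : \sum_(0 <= t < T) a t + a T = a 0%N + \sum_(0 <= t < T) a t.+1.
  by rewrite -big_nat_recr // big_nat_recl.
lra.
Qed.

Lemma ogdSS {R : realType} {n : nat} (P : 'rV[R]_n -> 'rV[R]_n) g l x0 t :
  ogd P g l x0 t.+2
    = P (ogd P g l x0 t.+1 - l^-1 *: g t.+1 (ogd P g l x0 t.+1)).
Proof. by []. Qed.

Section OnlineGradientDescent.
Context {R : realType} {n : nat} (X : set 'rV[R]_n) (P : 'rV[R]_n -> 'rV[R]_n)
  (alpha l G : R) (x0 : 'rV[R]_n) (T : nat) (f : nat -> 'rV[R]_n -> R)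
  (g : nat -> 'rV[R]_n -> 'rV[R]_n) (theta : nat -> 'rV[R]_n).
Hypotheses (convX : convex_set X) (projP : is_projection X P) (X_x0 : X x0)
  (alpha_gt0 : 0 < alpha) (alpha_le_l : alpha <= l)
  (fF : forall t, (1 <= t <= T)%N -> in_FX X alpha l G (f t) (g t))
  (theta0 : theta 0%N = x0)
  (theta_min : forall t, (1 <= t <= T)%N -> is_argmin X (f t) (theta t)).

Local Notation x := (ogd P g l x0).
Local Notation kappa := (Num.sqrt (1 - alpha / l)).

Let l_gt0 : 0 < l := lt_le_trans alpha_gt0 alpha_le_l.

Let kappa_le1 : kappa <= 1.
Proof. by rewrite -[leRHS]sqrtr1 ler_wsqrtr // gerBl divr_ge0 // ltW. Qed.

Lemma ogd_mem t : X (x t).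
Proof. by case: t => [|[|t]] //; apply: (projP _).1. Qed.

Lemma ogd_tracking t : (t < T)%N ->
  enorm (x t.+1 - theta t.+1)
    <= kappa * enorm (x t - theta t) + enorm (theta t.+1 - theta t).
Proof.
case: t => [_|t tT]; first by rewrite theta0 subrr enorm0 mulr0 add0r enorm_distC.
have tT' : (1 <= t.+1 <= T)%N by exact: ltnW.
have [_ convf smoothg _] := fF tT'.
rewrite (le_trans (enorm_distD_le (theta t.+1) _ _)) // (enorm_distC (theta _)) lerD2r.
exact: proj_grad_step_contract convX projP l_gt0 convf smoothg (theta_min tT') _.
Qed.

Lemma ogd_step_sqr_le t : (t < T)%N ->
  enorm (x t.+1 - x t) ^+ 2 <= 2 * (G / l) * enorm (x t - theta t).
Proof.
case: t => [_|t tT]; first by rewrite /= theta0 subrr enorm0 expr0n mulr0.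
have tT' : (1 <= t.+1 <= T)%N by exact: ltnW.
have [_ convf smoothg gradG] := fF tT'.
have le_G : enorm (x t.+2 - x t.+1) <= G / l.
  rewrite ogdSS (le_trans (projection_step_le convX projP _ (ogd_mem t.+1))) //.
  have l_inv_ge0 : 0 <= l^-1 by rewrite invr_ge0 ltW.
  rewrite enormZ ger0_norm // mulrC ler_wpM2r // gradG //; exact: ogd_mem.
have le_dist : enorm (x t.+2 - x t.+1) <= 2 * enorm (x t.+1 - theta t.+1).
  have := proj_grad_step_contract convX projP l_gt0 convf smoothg (theta_min tT') (x t.+1).
  rewrite -ogdSS => contract.
  rewrite (le_trans (enorm_distD_le (theta t.+1) _ _)) // (enorm_distC (theta _)).
  have := enorm_ge0 (x t.+1 - theta t.+1); have := kappa_le1; nra.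
have := enorm_ge0 (x t.+2 - x t.+1); nra.
Qed.

End OnlineGradientDescent.

Theorem lemma8 (R : realType) (n : nat) (X : set 'rV[R]_n)
  (alpha l G : R) (x0 : 'rV[R]_n) (T : nat)
  (f : nat -> 'rV[R]_n -> R) (g : nat -> 'rV[R]_n -> 'rV[R]_n)
  (P : 'rV[R]_n -> 'rV[R]_n) (theta : nat -> 'rV[R]_n) :
  X !=set0 -> compact X -> convex_set X ->
  is_projection X P -> X x0 ->
  0 < alpha -> alpha <= l ->
  (forall t, (1 <= t <= T)%N -> in_FX X alpha l G (f t) (g t)) ->
  theta 0%N = x0 ->
  (forall t, (1 <= t <= T)%N -> is_argmin X (f t) (theta t)) ->
  let x := ogd P g l x0 in
  let kappa := Num.sqrt (1 - alpha / l) in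
  \sum_(1 <= t < T.+1) enorm (x t - x t.-1) ^+ 2
    <= (2 * G) / (l * (1 - kappa)) *
       \sum_(1 <= t < T.+1) enorm (theta t - theta t.-1).
Proof.
move=> _ _ convX projP X_x0 alpha_gt0 alpha_le_l fF theta0 theta_min; cbv zeta.
set kappa := Num.sqrt (1 - alpha / l).
have l_gt0 : 0 < l := lt_le_trans alpha_gt0 alpha_le_l.
have kappa_lt1 : kappa < 1.
  by rewrite -[ltRHS]sqrtr1 ltr_sqrt // gtrBl divr_gt0.
case: T fF theta_min => [|T] fF theta_min; first by rewrite !big_geq // mulr0.
have G_ge0 : 0 <= G.
  by have [_ _ _ gradG] := fF 1%N isT; apply: le_trans (gradG _ X_x0); apply: enorm_ge0.
rewrite !big_add1.
set S := \sum_(0 <= t < T.+1) enorm (ogd P g l x0 t - theta t).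
have steps : \sum_(0 <= t < T.+1) enorm (ogd P g l x0 t.+1 - ogd P g l x0 t) ^+ 2
    <= 2 * (G / l) * S.
  rewrite mulr_sumr; apply: ler_sum_nat => t /andP[_ tT].
  exact: ogd_step_sqr_le convX projP X_x0 alpha_gt0 alpha_le_l fF theta0 theta_min t tT.
have := sum_le_of_contraction (enorm_ge0 _)
  (ogd_tracking convX projP alpha_gt0 alpha_le_l fF theta0 theta_min).
rewrite theta0 subrr enorm0 add0r -/S -/kappa => tracking.
set D := \sum_(0 <= t < _) _ in tracking *.
have -> : 2 * G / (l * (1 - kappa)) * D = 2 * (G / l) * (D / (1 - kappa)).
  by field; rewrite subr_eq0 gt_eqF // gt_eqF.
rewrite (le_trans steps) // ler_wpM2l ?mulr_ge0 ?invr_ge0 ?(ltW l_gt0) //.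
by rewrite ler_pdivlMr ?subr_gt0 // mulrC.
Qed.
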